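(* Let $X$ be a convex metric space over a Boolean ring $B$, $0\in X$, $R=\{x_{1},\ldots,x_{n}\}$ a referential of $(X,0)$, and $x\in X$. There is a unique tuple $(a_{1},\ldots,a_{n})\in B^{n}$ such that: (1) $a_{i}a_{j}=0$ whenever $i\neq j$; (2) $x=\sum_{i=1}^{n}a_{i}x_{i}$ (orthogonal combination); (3) $a_{i}\le |x_{i}|$ for $i=1,\ldots,n$.
   Context: $B$ is a Boolean ring ($a\vee b=a+b+ab$, $a\le b\iff ab=a$; $a_1\oplus\cdots\oplus a_n$ denotes a sum of pairwise disjoint elements). A Boolean metric space over $B$: set $X$ with $d:X\times X\to B$, $d(x,y)=0\iff x=y$, symmetric, $d(x,z)\le d(x,y)\vee d(y,z)$. For $y_1,\dots,y_m\in X$, $b_i\in B$ with $b_1\oplus\cdots\oplus b_m=1$, $y$ is a convex combination of the $y_i$ with coefficients $b_i$ if $b_id(y,y_i)=0$ for all $i$ (unique when it exists); $X$ is convex if all such combinations exist. In $(X,0)$: $|x|=d(0,x)$. For pairwise disjoint $a_1,\dots,a_n\in B$, the orthogonal combination $\sum_{i=1}^n a_ix_i$ denotes the convex combination of $0,x_1,\dots,x_n$ with coefficients $a_0,a_1,\dots,a_n$ where $a_0=1+a_1+\cdots+a_n$. $x\perp y$ iff $d(x,y)=|x|\vee|y|$; a finite $R\subseteq X$ is orthogonal if $0\notin R$ and distinct elements are orthogonal; a referential of $(X,0)$ is an orthogonal $R$ such that every element of $X$ is a convex combination of elements of $R\cup\{0\}$. *)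

From HB Require Import structures.
From mathcomp Require Import all_boot all_order all_algebra.
Set Implicit Arguments. Unset Strict Implicit. Unset Printing Implicit Defensive.
Import GRing.Theory.
Local Open Scope ring_scope.

(* A Boolean ring: a (unital, possibly trivial) ring in which every element is
   idempotent. (Commutativity and characteristic 2 follow.) *)
Definition boolean_ring (B : pzRingType) : Prop := forall a : B, a * a = a.

Definition bjoin (B : pzRingType) (a b : B) : B := a + b + a * b.
Definition ble (B : pzRingType) (a b : B) : Prop := a * b = a.

Definition boolean_metric (B : pzRingType) (X : Type) (d : X -> X -> B) : Prop :=
  (forall x y, d x y = 0 <-> x = y) /\
  (forall x y, d x y = d y x) /\
  (forall x y z, ble (d x z) (bjoin (d x y) (d y z))).

Definition disjoint_family (B : pzRingType) (m : nat) (b : 'I_m -> B) : Prop :=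
  forall i j : 'I_m, i != j -> b i * b j = 0.

Definition partition_of_unity (B : pzRingType) (m : nat) (b : 'I_m -> B) : Prop :=
  disjoint_family b /\ \sum_(i < m) b i = 1.

Definition is_convex_comb (B : pzRingType) (X : Type) (d : X -> X -> B)
  (m : nat) (y : X) (ys : 'I_m -> X) (bs : 'I_m -> B) : Prop :=
  partition_of_unity bs /\ forall i : 'I_m, bs i * d y (ys i) = 0.

Definition convex_space (B : pzRingType) (X : Type) (d : X -> X -> B) : Prop :=
  forall (m : nat) (ys : 'I_m -> X) (bs : 'I_m -> B),
    partition_of_unity bs -> exists y : X, is_convex_comb d y ys bs.

Definition cons_fam (T : Type) (n : nat) (z0 : T) (f : 'I_n -> T) : 'I_n.+1 -> T :=
  fun i => match unlift ord0 i with None => z0 | Some j => f j end.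

Definition bnorm (B : pzRingType) (X : Type) (d : X -> X -> B) (o x : X) : B := d o x.

(* x = sum_i a_i x_i (orthogonal combination in (X,o)): the convex combination of
   o, x_1, ..., x_n with coefficients a_0, a_1, ..., a_n, a_0 = 1 + a_1 + ... + a_n;
   the a_i are required pairwise disjoint. *)
Definition is_orth_comb (B : pzRingType) (X : Type) (d : X -> X -> B) (o : X)
  (n : nat) (x : X) (xs : 'I_n -> X) (a : 'I_n -> B) : Prop :=
  disjoint_family a /\
  is_convex_comb d x (cons_fam o xs) (cons_fam (1 + \sum_(i < n) a i) a).

Definition orthogonal (B : pzRingType) (X : Type) (d : X -> X -> B) (o x y : X) : Prop :=
  d x y = bjoin (bnorm d o x) (bnorm d o y).

Definition orthogonal_set (B : pzRingType) (X : Type) (d : X -> X -> B) (o : X)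
  (n : nat) (xs : 'I_n -> X) : Prop :=
  (forall i, xs i <> o) /\ (forall i j, i != j -> orthogonal d o (xs i) (xs j)).

Definition referential (B : pzRingType) (X : Type) (d : X -> X -> B) (o : X)
  (n : nat) (xs : 'I_n -> X) : Prop :=
  injective xs /\ orthogonal_set d o xs /\
  forall x : X, exists (m : nat) (ys : 'I_m -> X) (bs : 'I_m -> B),
    (forall k, ys k = o \/ exists i, ys k = xs i) /\ is_convex_comb d x ys bs.

From Pilot Require Import Defs.
From mathcomp Require Import all_boot all_order all_algebra.
From Stdlib Require Import ClassicalEpsilon FunctionalExtensionality.
Set Implicit Arguments. Unset Strict Implicit. Unset Printing Implicit Defensive.
Import GRing.Theory.
Local Open Scope ring_scope.

(* The referential property writes x as a convex combination of
   points y_k, each equal to 0 or to some x_i, with coefficients b_k.  Grouping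
   the b_k according to which x_i the point y_k is, we get c_i = sum of the b_k
   with y_k = x_i, and put a_i = c_i |x_i|.  The a_i are disjoint, bounded by
   |x_i|, kill d(x, x_i), and (1 + sum a_i) kills d(x, 0): on the part b_k with
   y_k = x_j the triangle inequality gives d(x,0) = d(x,0) |x_j|.

   For two solutions a, a' with a_i <= |x_i|, the triangle
   inequality through x shows that a_i a'_j kills d(x_i, x_j) = |x_i| v |x_j|
   for j <> i, and that a_i (1 + sum a') kills |x_i|; as a_i <= |x_i| both
   products vanish, so a_i <= a'_i.  By symmetry a = a'. *)

Section BooleanRing.
Variables (B : pzRingType) (hB : boolean_ring B).

Lemma addbb (a : B) : a + a = 0.
Proof.
have h := hB (a + a); rewrite mulrDl !mulrDr hB in h.
by apply: (addrI (a + a)); rewrite addr0.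
Qed.

Lemma oppb (a : B) : - a = a.
Proof. by apply/eqP; rewrite eq_sym -addr_eq0 addbb. Qed.

Lemma mulbC (a b : B) : a * b = b * a.
Proof.
have h := hB (a + b); rewrite mulrDl !mulrDr !hB in h.
have ab_ba : a * b + b * a = 0.
  apply: (addrI (a + b)); rewrite addr0 -[RHS]h.
  by rewrite -!addrA [b + _]addrC -!addrA.
by move/eqP: ab_ba; rewrite addr_eq0 oppb => /eqP.
Qed.

Lemma mulbCA (a b c : B) : a * (b * c) = b * (a * c).
Proof. by rewrite !mulrA (mulbC a b). Qed.

Lemma mulbAC (a b c : B) : a * b * c = a * c * b.
Proof. by rewrite -!mulrA (mulbC b c). Qed.

Lemma ble_bjoin (e p q : B) : ble e p -> e * bjoin p q = e.
Proof.
rewrite /ble /bjoin => ep.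
by rewrite !mulrDr ep mulrA ep -addrA addbb addr0.
Qed.

Lemma mul_disjoint_sum m (f : 'I_m -> B) (P : pred 'I_m) (k : 'I_m) :
  disjoint_family f -> f k * \sum_(j < m | P j) f j = if P k then f k else 0.
Proof.
move=> fdis; rewrite mulr_sumr; case: (boolP (P k)) => Pk.
  rewrite (bigD1 k) //= hB big1 ?addr0 // => j /andP[_ jk].
  by apply: fdis; rewrite eq_sym.
by apply: big1 => j Pj; apply: fdis; apply: contraNneq Pk => ->.
Qed.

End BooleanRing.

Section TriangleInequality.
Variables (B : pzRingType) (X : Type) (d : X -> X -> B).
Hypotheses (hB : boolean_ring B) (hd : boolean_metric d).

Lemma mul_dist_trans (e : B) (x y z : X) :
  e * d x y = 0 -> e * d y z = 0 -> e * d x z = 0.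
Proof.
case: hd => _ [_ htri] exy eyz.
rewrite -(htri x y z) /bjoin !mulrDr !mulrA (mulbAC hB e (d x z)) exy mul0r.
by rewrite (mulbAC hB e (d x z) (d y z)) eyz !mul0r add0r addr0.
Qed.

Lemma mul_dist_le (e : B) (x y z : X) :
  e * d x y = 0 -> e * d x z = e * d x z * d y z.
Proof.
case: hd => _ [_ htri] exy.
rewrite -{1}(htri x y z) /bjoin !mulrDr !mulrA (mulbAC hB e (d x z)) exy.
by rewrite !mul0r add0r addr0.
Qed.

End TriangleInequality.

Lemma cons_fam0 (T : Type) n (z : T) (f : 'I_n -> T) : cons_fam z f ord0 = z.
Proof. by rewrite /cons_fam unlift_none. Qed.

Lemma cons_famS (T : Type) n (z : T) (f : 'I_n -> T) j :
  cons_fam z f (lift ord0 j) = f j.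
Proof. by rewrite /cons_fam liftK. Qed.

Section OrthogonalCombination.
Variables (B : pzRingType) (X : Type) (d : X -> X -> B) (o : X) (n : nat).
Variables (xs : 'I_n -> X) (x : X) (a : 'I_n -> B).

Lemma orth_comb_parts :
  is_orth_comb d o x xs a ->
  (1 + \sum_(i < n) a i) * d x o = 0 /\ forall i, a i * d x (xs i) = 0.
Proof.
case=> _ [_ comb]; split; first by have := comb ord0; rewrite !cons_fam0.
by move=> i; have := comb (lift ord0 i); rewrite !cons_famS.
Qed.

(* Conversely, for a disjoint family these products suffice: the coefficients
   1 + sum a_i, a_1, ..., a_n then form a partition of unity. *)
Lemma orth_comb_intro :
  boolean_ring B -> disjoint_family a ->
  (1 + \sum_(i < n) a i) * d x o = 0 -> (forall i, a i * d x (xs i) = 0) ->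
  is_orth_comb d o x xs a.
Proof.
move=> hB adis a0 ai; split=> //.
have asum i : a i * \sum_(j < n) a j = a i by exact: (mul_disjoint_sum hB xpredT).
split; last first.
  by move=> i; case: (unliftP ord0 i) => [i' ->|->]; rewrite ?cons_fam0 ?cons_famS.
split.
  move=> i j; case: (unliftP ord0 i) => [i' ->|->];
    case: (unliftP ord0 j) => [j' ->|->]; rewrite ?cons_fam0 ?cons_famS ?eqxx //.
  - by move=> ij; apply: adis; apply: contraNneq ij => ->.
  - by move=> _; rewrite mulrDr mulr1 asum addbb.
  - by move=> _; rewrite mulrDl mul1r (mulbC hB _ (a j')) asum addbb.
rewrite big_ord_recl cons_fam0.
rewrite [X in _ + X = _](eq_bigr (fun i => a i)) => [|i _]; last exact: cons_famS.
by rewrite -addrA addbb // addr0.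
Qed.

End OrthogonalCombination.

Definition decide (P : Prop) : bool :=
  if excluded_middle_informative P then true else false.

Lemma decideP (P : Prop) : decide P <-> P.
Proof. by rewrite /decide; case: excluded_middle_informative. Qed.

Section Existence.
Variables (B : pzRingType) (X : Type) (d : X -> X -> B) (o : X) (n : nat).
Variables (xs : 'I_n -> X) (x : X) (m : nat) (ys : 'I_m -> X) (bs : 'I_m -> B).
Hypotheses (hB : boolean_ring B) (hd : boolean_metric d) (xs_inj : injective xs).
Hypothesis ys_in : forall k, ys k = o \/ exists i, ys k = xs i.
Hypothesis x_comb : is_convex_comb d x ys bs.

Definition hits (k : 'I_m) (i : 'I_n) : bool := decide (ys k = xs i).
Definition coef (i : 'I_n) : B := \sum_(k < m | hits k i) bs k.
Definition coord (i : 'I_n) : B := coef i * bnorm d o (xs i).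

Lemma hits_eq k j : ys k = xs j -> forall i, hits k i = (i == j).
Proof.
move=> ykj i; apply/idP/eqP => [/decideP|->]; last exact/decideP.
by rewrite ykj => /xs_inj.
Qed.

Lemma bs_coef k i : bs k * coef i = if hits k i then bs k else 0.
Proof. by case: x_comb => [[bdis _] _]; exact: mul_disjoint_sum. Qed.

Lemma coef_disjoint : disjoint_family coef.
Proof.
move=> i j ij; rewrite mulr_suml big1 // => k /decideP yki; rewrite bs_coef.
by rewrite (hits_eq yki) eq_sym (negbTE ij).
Qed.

Lemma coord_disjoint : disjoint_family coord.
Proof.
by move=> i j ij; rewrite /coord mulrA (mulbAC hB (coef i)) coef_disjoint // !mul0r.
Qed.

Lemma coord_le i : ble (coord i) (bnorm d o (xs i)).
Proof. by rewrite /ble /coord -mulrA hB. Qed.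

Lemma coord_dist i : coord i * d x (xs i) = 0.
Proof.
rewrite /coord (mulbAC hB) mulr_suml big1 ?mul0r // => k /decideP <-.
by case: x_comb => _; apply.
Qed.

Lemma bs_coord_sum k j :
  ys k = xs j -> bs k * \sum_(i < n) coord i = bs k * bnorm d o (xs j).
Proof.
move=> ykj; rewrite mulr_sumr (bigD1 j) //= big1 ?addr0.
  by rewrite /coord mulrA bs_coef (hits_eq ykj) eqxx.
by move=> i ij; rewrite /coord mulrA bs_coef (hits_eq ykj) (negbTE ij) mul0r.
Qed.

Lemma coord_origin : (1 + \sum_(i < n) coord i) * d x o = 0.
Proof.
case: x_comb => [[_ bsum] bdist].
have hsym u v : d u v = d v u by case: hd => _ [].
rewrite -[LHS]mul1r -{1}bsum mulr_suml big1 // => k _.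
case: (ys_in k) => [yko|[j ykj]].
  by rewrite mulbCA //; have := bdist k; rewrite yko => ->; rewrite mulr0.
have bk_xj : bs k * d x (xs j) = 0 by have := bdist k; rewrite ykj.
rewrite mulrA mulrDr mulr1 (bs_coord_sum ykj) mulrDl.
rewrite (mulbAC hB (bs k)) /bnorm (hsym o) -(mul_dist_le hB hd o bk_xj).
by rewrite addbb.
Qed.

Lemma coord_orth_comb : is_orth_comb d o x xs coord.
Proof.
exact: (orth_comb_intro hB coord_disjoint coord_origin coord_dist).
Qed.

End Existence.

Lemma orth_comb_le (B : pzRingType) (X : Type) (d : X -> X -> B) (o : X)
  (n : nat) (xs : 'I_n -> X) (x : X) (a a' : 'I_n -> B) :
  boolean_ring B -> boolean_metric d ->
  (forall i j, i != j -> Defs.orthogonal d o (xs i) (xs j)) ->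
  is_orth_comb d o x xs a -> (forall i, ble (a i) (bnorm d o (xs i))) ->
  is_orth_comb d o x xs a' -> forall i, a i = a i * a' i.
Proof.
move=> hB hd xorth a_comb ale a'_comb i.
have [a0 ai] := orth_comb_parts a_comb.
have [a'0 a'i] := orth_comb_parts a'_comb.
have hsym u v : d u v = d v u by case: hd => _ [].
have off_diag j : j != i -> a i * a' j = 0.
  move=> ji; have orth_ij : Defs.orthogonal d o (xs i) (xs j) by apply: xorth; rewrite eq_sym.
  have : a i * a' j * d (xs i) (xs j) = 0.
    apply: (mul_dist_trans hB hd (y := x)).
      by rewrite hsym -mulrA mulbCA // ai mulr0.
    by rewrite -mulrA a'i mulr0.
  by rewrite orth_ij /bnorm (mulbAC hB) ble_bjoin.
have off_origin : a i * (1 + \sum_(j < n) a' j) = 0.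
  have : a i * (1 + \sum_(j < n) a' j) * d o (xs i) = 0.
    apply: (mul_dist_trans hB hd (y := x)).
      by rewrite hsym -mulrA a'0 mulr0.
    by rewrite -mulrA mulbCA // ai mulr0.
  by rewrite (mulbAC hB) ale.
have split_one : a i = a i * ((1 + \sum_(j < n) a' j) + \sum_(j < n) a' j).
  by rewrite -addrA addbb // addr0 mulr1.
rewrite {1}split_one mulrDr off_origin add0r mulr_sumr (bigD1 i) //=.
by rewrite big1 ?addr0.
Qed.

Theorem mainTheorem11 (B : pzRingType) (X : Type) (d : X -> X -> B) (o : X)
  (n : nat) (xs : 'I_n -> X) (x : X) :
  boolean_ring B -> boolean_metric d -> convex_space d ->
  referential d o xs ->
  exists! a : 'I_n -> B,
    disjoint_family a /\ is_orth_comb d o x xs a /\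
    (forall i : 'I_n, ble (a i) (bnorm d o (xs i))).
Proof.
move=> hB hd _ [xs_inj [[_ xorth] xs_ref]].
have [m [ys [bs [ys_in x_comb]]]] := xs_ref x.
have coord_comb := coord_orth_comb hB hd xs_inj ys_in x_comb.
have coord_bounded i : ble (coord d o xs ys bs i) (bnorm d o (xs i)).
  exact: coord_le.
exists (coord d o xs ys bs); split.
  by split; [case: coord_comb | split].
move=> a' [_ [a'_comb a'_le]].
apply: functional_extensionality => i.
rewrite (orth_comb_le hB hd xorth coord_comb coord_bounded a'_comb i).
by rewrite [RHS](orth_comb_le hB hd xorth a'_comb a'_le coord_comb i) mulbC.
Qed.
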